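(* Let $A=(a_{ij})$ be a real $n\times n$ matrix with nonnegative entries, $\mathbf 1=(1,\ldots,1)^{\mathrm T}$, $L=\operatorname{diag}(A\mathbf 1)-A$, let $S$ be the orthogonal projection of $\mathbb R^n$ onto $\mathcal R(L)\oplus\operatorname{span}(\mathbf 1)$, and let $\tilde J$ be the eigenprojection of $L$ corresponding to the eigenvalue $0$. Then $S\tilde J S=\tilde J S$ and $\operatorname{rank}(\tilde J S)=1$.
   Context: $\mathcal R(M)$ and $\mathcal N(M)$ denote range and null space of a matrix $M$. The index $\operatorname{ind}M$ is the smallest $k\ge0$ with $\operatorname{rank}M^{k+1}=\operatorname{rank}M^k$. The eigenprojection of $M$ corresponding to the eigenvalue $0$ is the idempotent matrix $Z$ with $\mathcal R(Z)=\mathcal N(M^{\nu})$ and $\mathcal N(Z)=\mathcal R(M^{\nu})$, where $\nu=\operatorname{ind}M$. *)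

From HB Require Import structures.
From mathcomp Require Import all_boot all_order all_algebra.
Set Implicit Arguments. Unset Strict Implicit. Unset Printing Implicit Defensive.
Import Order.TTheory GRing.Theory Num.Theory.
Local Open Scope ring_scope.

(* MathComp's
   subspace calculus (%MS) works with ROW spaces, so a subspace of R^n is
   represented by a matrix whose rows are the transposes of spanning
   column vectors. *)

Definition onesv (R : pzRingType) (n : nat) : 'cV[R]_n := const_mx 1.

Definition laplacian (R : pzRingType) (n : nat) (A : 'M[R]_n) : 'M[R]_n :=
  diag_mx (A *m onesv R n)^T - A.

(* range R(M) = column space of M (as a row space: rows of M^T) *)
Definition mxrange (R : fieldType) (m n : nat) (M : 'M[R]_(m, n)) : 'M[R]_(n, m) :=
  M^T.

(* null space N(M) = { v | M v = 0 } (as a row space: kermx M^T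
   spans { v^T | v^T M^T = 0 }) *)
Definition mxnull (R : fieldType) (m n : nat) (M : 'M[R]_(m, n)) : 'M[R]_n :=
  kermx M^T.

Definition is_orth_proj (R : fieldType) (n k : nat) (P : 'M[R]_n) (V : 'M[R]_(k, n)) :=
  [/\ P *m P = P, P^T = P & (mxrange P == V)%MS].

Definition is_index (R : fieldType) (n : nat) (M : 'M[R]_n) (nu : nat) :=
  \rank (M ^+ nu.+1) = \rank (M ^+ nu) /\
  (forall k, (k < nu)%N -> \rank (M ^+ k.+1) <> \rank (M ^+ k)).

Definition is_eigenproj0 (R : fieldType) (n : nat) (M Z : 'M[R]_n) :=
  exists nu, [/\ is_index M nu, Z *m Z = Z,
                 (mxrange Z == mxnull (M ^+ nu))%MS &
                 (mxnull Z == mxrange (M ^+ nu))%MS].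

(* The Laplacian L of a nonnegative matrix satisfies a maximum principle: if
   L y = 0 then the maximizers of y are closed under the arcs of A.  Applied to
   y = L x and to -L x this shows that L^2 x = 0 forces L x = 0, so ind L = 1 (L is singular
   since L 1 = 0), and the eigenprojection J of L for 0 annihilates R(L) and
   fixes 1.  The columns of S lie in R(L) + span(1), so those of J S lie in
   span(1), which S fixes; and J S 1 = J 1 = 1 shows J S <> 0. *)

From HB Require Import structures.
From mathcomp Require Import all_boot all_order all_algebra.
Set Implicit Arguments. Unset Strict Implicit. Unset Printing Implicit Defensive.
Import Order.TTheory GRing.Theory Num.Theory.
Local Open Scope ring_scope.

Section LinearAlgebra.

Variables (F : fieldType) (n : nat).
Implicit Types (M P Z : 'M[F]_n) (v : 'cV[F]_n).

Lemma mxrank_lt_mulmx_eq0 M v : M *m v = 0 -> v != 0 -> (\rank M < n)%N.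
Proof.
move=> Mv0 v_neq0; rewrite ltn_neqAle rank_leq_col andbT.
apply: contraNneq v_neq0 => rkM.
have /mulKmx M_inj : M \in unitmx by rewrite -row_free_unit /row_free rkM.
by rewrite -(M_inj _ v) Mv0 mulmx0.
Qed.

Lemma mxrank_sqr M :
  (forall v, M *m (M *m v) = 0 -> M *m v = 0) -> \rank (M *m M) = \rank M.
Proof.
move=> kerM2; rewrite -mxrank_tr -[RHS]mxrank_tr trmx_mul.
rewrite -[RHS](mxrank_mul_ker M^T M^T); apply/eqP; rewrite -{1}[\rank _]addn0.
rewrite eqn_add2l eq_sym mxrank_eq0; apply/rowV0P => w.
rewrite sub_capmx => /andP[/submxP[u ->] /sub_kermxP uMM0].
have /kerM2/(congr1 trmx) : M *m (M *m u^T) = 0.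
  by apply: trmx_inj; rewrite !trmx_mul trmxK uMM0 trmx0.
by rewrite trmx0 trmx_mul trmxK.
Qed.

Lemma is_index1 M nu :
  is_index M nu -> (\rank M < n)%N -> \rank (M *m M) = \rank M -> nu = 1%N.
Proof.
case=> rk_nu nu_min rkM rkM2; case: nu rk_nu nu_min => [|[|nu]] // rk_nu nu_min.
  by move: rk_nu rkM; rewrite expr1 expr0 mxrank1 => ->; rewrite ltnn.
by have := nu_min 1%N isT; rewrite expr1 expr2 -mulmxE rkM2.
Qed.

Lemma idempotent_fixes_range m P (X : 'M[F]_(n, m)) :
  P *m P = P -> (mxrange X <= mxrange P)%MS -> P *m X = X.
Proof.
rewrite /mxrange => PP /submxP[U XU]; apply: trmx_inj.
by rewrite trmx_mul XU -mulmxA -trmx_mul PP.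
Qed.

Lemma eigenproj0_index1 M Z :
  is_eigenproj0 M Z -> (\rank M < n)%N -> \rank (M *m M) = \rank M ->
  Z *m M = 0 /\ (forall v, M *m v = 0 -> Z *m v = v).
Proof.
case=> nu [ind_nu ZZ rangeZ kerZ] rkM rkM2.
move: rangeZ kerZ; rewrite (is_index1 ind_nu rkM rkM2) expr1 /mxrange /mxnull.
move=> /andP[_ kerM_sub] /andP[_ /sub_kermxP ZM0]; split.
  by apply: trmx_inj; rewrite trmx_mul ZM0 trmx0.
move=> v Mv0; apply: idempotent_fixes_range => //; apply: submx_trans kerM_sub.
by rewrite sub_kermx -trmx_mul Mv0 trmx0.
Qed.

Lemma mxrange_mulmx_line Z M P v :
  Z *m M = 0 -> Z *m v = v -> (mxrange P <= mxrange M + mxrange v)%MS ->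
  (mxrange (Z *m P) <= mxrange v)%MS.
Proof.
rewrite /mxrange trmx_mul => ZM0 Zv /(submxMr Z^T); rewrite addsmxMr.
by rewrite -!trmx_mul ZM0 Zv trmx0 adds0mx.
Qed.

End LinearAlgebra.

Section Laplacian.

Variables (R : realFieldType) (n : nat) (A : 'M[R]_n).
Hypothesis A_ge0 : forall i j, 0 <= A i j.
Local Notation L := (laplacian A).
Implicit Types x y : 'cV[R]_n.

Lemma laplacian_mulmxE x i : (L *m x) i 0 = \sum_j A i j * (x i 0 - x j 0).
Proof.
rewrite /laplacian mulmxBl mul_diag_mx !mxE /onesv.
under eq_bigr do rewrite mxE.
by rewrite mulr_suml -sumrB; apply: eq_bigr => j _; rewrite mulr1 mulrBr.
Qed.

Lemma laplacian_ones : L *m onesv R n = 0.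
Proof.
apply/matrixP => i j; rewrite ord1 laplacian_mulmxE [RHS]mxE big1 // => k _.
by rewrite !mxE subrr mulr0.
Qed.

Lemma laplacian_argmax_closed y k j :
  (L *m y) k 0 = 0 -> (forall i, y i 0 <= y k 0) -> 0 < A k j -> y j 0 = y k 0.
Proof.
move=> + y_k Akj.
rewrite laplacian_mulmxE => /eqP; rewrite psumr_eq0 => [|i _]; last first.
  by rewrite mulr_ge0 // subr_ge0.
move=> /allP/(_ j (mem_index_enum _)); rewrite /= mulf_eq0 gt_eqF //=.
by rewrite subr_eq0 => /eqP.
Qed.

Lemma laplacian_sqr_le0 x i : L *m (L *m x) = 0 -> (L *m x) i 0 <= 0.
Proof.
set y := L *m x => Ly0.
have [k0 _ y_k0] := @arg_maxP _ R _ i predT (fun k => y k 0) isT.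
pose argmax_y := [pred k | y k 0 == y k0 0].
have [k1 /eqP y_k1 x_k1] :=
  @arg_minP _ R _ k0 argmax_y (fun k => x k 0) (eqxx _).
(* Every arc out of k1 ends in a maximizer of y, where x is at least x k1. *)
apply: le_trans (y_k0 i isT) _.
rewrite -y_k1 /y laplacian_mulmxE sumr_le0 // => j _.
have [Akj_gt0|] := ltP 0 (A k1 j); last first.
  by rewrite le_eqVlt ltNge A_ge0 orbF => /eqP ->; rewrite mul0r.
rewrite mulr_ge0_le0 ?A_ge0 // subr_le0 x_k1 // inE /=.
rewrite -y_k1 (@laplacian_argmax_closed y k1 j _ _ Akj_gt0) //.
  by rewrite Ly0 mxE.
by move=> l; rewrite y_k1; apply: y_k0.
Qed.

Lemma laplacian_sqr_kernel x : L *m (L *m x) = 0 -> L *m x = 0.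
Proof.
move=> L2x0; apply/matrixP => i j; rewrite ord1 [RHS]mxE; apply/eqP.
have L2Nx0 : L *m (L *m - x) = 0 by rewrite !mulmxN L2x0 oppr0.
have := laplacian_sqr_le0 i L2Nx0; rewrite mulmxN mxE oppr_le0 => Lx_ge0.
by rewrite eq_le laplacian_sqr_le0.
Qed.

End Laplacian.

Lemma onesv_neq0 (R : nzRingType) n : (0 < n)%N -> onesv R n != 0.
Proof.
move=> n_gt0; apply/eqP => /matrixP/(_ (Ordinal n_gt0) 0).
by rewrite !mxE; apply/eqP; rewrite oner_eq0.
Qed.

Theorem lemmaA2 (R : realFieldType) (n : nat) (n_gt0 : (0 < n)%N)
  (A : 'M[R]_n) (A_ge0 : forall i j, 0 <= A i j)
  (S Jt : 'M[R]_n)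
  (HS : is_orth_proj S (mxrange (laplacian A) + (onesv R n)^T)%MS)
  (HJ : is_eigenproj0 (laplacian A) Jt) :
  S *m Jt *m S = Jt *m S /\ \rank (Jt *m S) = 1%N.
Proof.
set L := laplacian A in HS HJ *; set one := onesv R n in HS *.
have one_neq0 : one != 0 := onesv_neq0 R n_gt0.
have rkL := mxrank_lt_mulmx_eq0 (laplacian_ones A) one_neq0.
have rkL2 := mxrank_sqr (laplacian_sqr_kernel A_ge0).
have [JL0 J_ker] := eigenproj0_index1 HJ rkL rkL2.
have J1 : Jt *m one = one := J_ker _ (laplacian_ones A).
case: HS => SS _ /andP[rangeS rangeS'].
have range1 : (mxrange one <= mxrange S)%MS :=
  submx_trans (addsmxSr _ _) rangeS'.
have rangeJS := mxrange_mulmx_line JL0 J1 rangeS.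
have S1 : S *m one = one := idempotent_fixes_range SS range1.
split; first by rewrite -mulmxA idempotent_fixes_range // (submx_trans rangeJS).
apply/eqP; rewrite eqn_leq -mxrank_tr.
rewrite (leq_trans (mxrankS rangeJS)) ?rank_leq_row //.
rewrite lt0n mxrank_eq0 -trmx0 (inj_eq trmx_inj); apply: contra_neq one_neq0.
by move=> JS0; rewrite -J1 -[in LHS]S1 mulmxA JS0 mul0mx.
Qed.
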